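(* Let $(\mathfrak g,\langle\cdot,\cdot\rangle)$ be a finite-dimensional real Lie algebra with a non-degenerate symmetric bilinear form which is ad-invariant, i.e. $\langle[X,Y],Z\rangle=-\langle Y,[X,Z]\rangle$ for all $X,Y,Z$, and which is flat, meaning the connection $\nabla_XY=\tfrac12[X,Y]$ has zero curvature (equivalently $\mathfrak g$ is nilpotent of class at most two). Then there exist an abelian Lie algebra $\mathfrak z$ with non-degenerate scalar product, a vector space $\mathfrak a$ and an alternating three-form $F\in\Lambda^3\mathfrak a^*$ such that $(\mathfrak g,\langle\cdot,\cdot\rangle)$ is isomorphic, as a metric Lie algebra, to the orthogonal direct product $(\mathfrak z,\langle\cdot,\cdot\rangle)\oplus(\mathfrak t_{\mathfrak a,F},\langle\cdot,\cdot\rangle_o)$.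
   Context: For a vector space $\mathfrak a$ and $F\in\Lambda^3\mathfrak a^*$, define $\omega_F:\mathfrak a\times\mathfrak a\to\mathfrak a^*$ by $\omega_F(u,v)(w)=F(u,v,w)$. The Lie algebra $\mathfrak t_{\mathfrak a,F}$ is the vector space $\mathfrak a^*\oplus\mathfrak a$ with bracket $[(\lambda,u),(\lambda',u')]=(\omega_F(u,u'),0)$. The scalar product $\langle\cdot,\cdot\rangle_o$ on $\mathfrak a^*\oplus\mathfrak a$ (of signature $(m,m)$, $m=\dim\mathfrak a$) is $\langle(\lambda,u),(\lambda',u')\rangle_o=\lambda(u')+\lambda'(u)$, so that $\mathfrak a$ and $\mathfrak a^*$ are totally isotropic. *)

(* Finite-dimensional spaces are modelled in coordinates:
   a vector space of dimension n is 'rV[R]_n. *)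
From HB Require Import structures.
From mathcomp Require Import all_boot all_order all_algebra.
Set Implicit Arguments. Unset Strict Implicit. Unset Printing Implicit Defensive.
Import Order.TTheory GRing.Theory Num.Theory.
Local Open Scope ring_scope.

Definition bilin (R : nzRingType) (n k : nat)
    (f : 'rV[R]_n -> 'rV[R]_n -> 'rV[R]_k) : Prop :=
  (forall (a : R) x y z, f (a *: x + y) z = a *: f x z + f y z) /\
  (forall (a : R) x y z, f z (a *: x + y) = a *: f z x + f z y).

Definition is_lie_bracket (R : nzRingType) (n : nat)
    (br : 'rV[R]_n -> 'rV[R]_n -> 'rV[R]_n) : Prop :=
  [/\ bilin br,
      (forall x, br x x = 0) &
      (forall x y z, br x (br y z) + br y (br z x) + br z (br x y) = 0)].

Definition bform (R : nzRingType) (n : nat) (B : 'M[R]_n) (x y : 'rV[R]_n) : R :=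
  (x *m B *m y^T) 0 0.

Definition nondeg_sym (R : comUnitRingType) (n : nat) (B : 'M[R]_n) : Prop :=
  B^T = B /\ B \in unitmx.

Definition ad_invariant (R : nzRingType) (n : nat) (B : 'M[R]_n)
    (br : 'rV[R]_n -> 'rV[R]_n -> 'rV[R]_n) : Prop :=
  forall x y z, bform B (br x y) z = - bform B y (br x z).

Definition nabla (R : fieldType) (n : nat)
    (br : 'rV[R]_n -> 'rV[R]_n -> 'rV[R]_n) (x y : 'rV[R]_n) : 'rV[R]_n :=
  (2%:R)^-1 *: br x y.

Definition curvature (R : fieldType) (n : nat)
    (br : 'rV[R]_n -> 'rV[R]_n -> 'rV[R]_n) (x y z : 'rV[R]_n) : 'rV[R]_n :=
  nabla br x (nabla br y z) - nabla br y (nabla br x z) - nabla br (br x y) z.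

Definition flat (R : fieldType) (n : nat)
    (br : 'rV[R]_n -> 'rV[R]_n -> 'rV[R]_n) : Prop :=
  forall x y z, curvature br x y z = 0.

Definition alt3 (R : nzRingType) (m : nat)
    (F : 'rV[R]_m -> 'rV[R]_m -> 'rV[R]_m -> R) : Prop :=
  [/\ (forall (a : R) x y v w, F (a *: x + y) v w = a * F x v w + F y v w),
      (forall (a : R) x y u w, F u (a *: x + y) w = a * F u x w + F u y w) &
      (forall (a : R) x y u v, F u v (a *: x + y) = a * F u v x + F u v y)] /\
  [/\ (forall u w, F u u w = 0),
      (forall u v, F u v v = 0) &
      (forall u v, F u v u = 0)].

(* The dual a^* of a = 'rV_m is identified with 'rV_m via the standard
   pairing  lambda(u) = (lambda *m u^T) 0 0. *)
Definition pair_dual (R : nzRingType) (m : nat) (lam u : 'rV[R]_m) : R :=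
  (lam *m u^T) 0 0.

(* omega_F(u,v) in a^*, i.e. the functional w |-> F(u,v,w) *)
Definition omegaF (R : nzRingType) (m : nat)
    (F : 'rV[R]_m -> 'rV[R]_m -> 'rV[R]_m -> R) (u v : 'rV[R]_m) : 'rV[R]_m :=
  \row_k F u v (delta_mx 0 k).

(* The orthogonal direct product z (+) t_{a,F}, where z = 'rV_p and
   t_{a,F} = a^* (+) a = 'rV_m (+) 'rV_m, realised as 'rV_(p + (m + m)):
   an element is row_mx z (row_mx lambda u). *)
Definition zpart (R : nzRingType) (p m : nat) (v : 'rV[R]_(p + (m + m))) : 'rV[R]_p :=
  lsubmx v.
Definition lampart (R : nzRingType) (p m : nat) (v : 'rV[R]_(p + (m + m))) : 'rV[R]_m :=
  lsubmx (rsubmx v).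
Definition upart (R : nzRingType) (p m : nat) (v : 'rV[R]_(p + (m + m))) : 'rV[R]_m :=
  rsubmx (rsubmx v).

Definition prod_bracket (R : nzRingType) (p m : nat)
    (F : 'rV[R]_m -> 'rV[R]_m -> 'rV[R]_m -> R)
    (v w : 'rV[R]_(p + (m + m))) : 'rV[R]_(p + (m + m)) :=
  row_mx 0 (row_mx (omegaF F (upart v) (upart w)) 0).

Definition prod_form (R : nzRingType) (p m : nat) (Bz : 'M[R]_p)
    (v w : 'rV[R]_(p + (m + m))) : R :=
  bform Bz (zpart v) (zpart w)
  + pair_dual (lampart v) (upart w) + pair_dual (lampart w) (upart v).

Definition metric_lie_iso (R : nzRingType) (n k : nat)
    (br1 : 'rV[R]_n -> 'rV[R]_n -> 'rV[R]_n) (f1 : 'rV[R]_n -> 'rV[R]_n -> R)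
    (br2 : 'rV[R]_k -> 'rV[R]_k -> 'rV[R]_k) (f2 : 'rV[R]_k -> 'rV[R]_k -> R)
    (phi : 'rV[R]_n -> 'rV[R]_k) : Prop :=
  [/\ (forall (a : R) x y, phi (a *: x + y) = a *: phi x + phi y),
      bijective phi,
      (forall x y, phi (br1 x y) = br2 (phi x) (phi y)) &
      (forall x y, f2 (phi x) (phi y) = f1 x y)].

From HB Require Import structures.
From mathcomp Require Import all_boot all_order all_algebra.
Import Order.TTheory GRing.Theory Num.Theory.
Local Open Scope ring_scope.
Set Implicit Arguments. Unset Strict Implicit.

(* By the Jacobi identity the curvature of
   nabla_X Y = 1/2 [X,Y] is -1/4 [[X,Y],Z], so flatness means that g is
   2-step nilpotent: [[x,y],z] = 0, i.e. D = [g,g] is central.  Ad-invariance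
   then makes D totally isotropic (<[x,y],[z,w]> = -<y,[x,[z,w]]> = 0) and,
   with nondegeneracy, forces the orthogonal of D to be central.  Choose a
   basis Dm of D; by Witt's argument it has an isotropic dual family A
   (hyperbolic pairs), and the orthogonal Z of span(Dm, A) is a
   nondegenerate complement.  In the basis Z ++ Dm ++ A the form is
   <.,.>_z (+) <.,.>_o, and since brackets only see the A-coordinates and
   land in D, the bracket is that of t_{a,F} with a = span A, a^* = D and
   F(u,v,w) = <[uA,vA],wA>. *)

Section RowCalculus.
Variable R : fieldType.

Lemma linear_rowE n k (f : 'rV[R]_n -> 'rV[R]_k) :
  (forall a x y, f (a *: x + y) = a *: f x + f y) ->
  forall x, f x = x *m \matrix_i f (delta_mx 0 i).
Proof.
move=> f_lin x.
have f0 : f 0 = 0.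
  have h := f_lin 1 0 0; rewrite !scale1r addr0 in h.
  by apply: (addrI (f 0)); rewrite -h addr0.
have fD y z : f (y + z) = f y + f z by rewrite -{1}[y]scale1r f_lin scale1r.
have fZ a y : f (a *: y) = a *: f y by rewrite -[a *: y]addr0 f_lin f0 addr0.
rewrite mulmx_sum_row; under eq_bigr => i _ do rewrite rowK.
rewrite {1}(row_sum_delta x).
by elim/big_rec2: _ => [|i y1 y2 _ <-]; rewrite ?f0 // fD fZ.
Qed.

Lemma addmx_entry k l (M N : 'M[R]_(k, l)) i j : (M + N) i j = M i j + N i j.
Proof. by rewrite mxE. Qed.

Lemma mx11_eq0 (M : 'M[R]_1) : M 0 0 = 0 -> M = 0.
Proof. by move=> h; apply/matrixP => i j; rewrite !ord1 h mxE. Qed.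

Lemma entry_delta n (r : 'rV[R]_n) k :
  (r *m (delta_mx (0 : 'I_1) k : 'rV[R]_n)^T) 0 0 = r 0 k.
Proof. by rewrite trmx_delta -colE mxE. Qed.

Lemma pairing_sym n (a b : 'rV[R]_n) : (a *m b^T) 0 0 = (b *m a^T) 0 0.
Proof.
have -> : (a *m b^T) 0 0 = ((a *m b^T)^T) 0 0 by rewrite [RHS]mxE.
by rewrite trmx_mul trmxK.
Qed.
End RowCalculus.

Section BilinearForm.
Variables (R : fieldType) (n : nat) (B : 'M[R]_n).

Lemma bformDl x y z : bform B (x + y) z = bform B x z + bform B y z.
Proof. by rewrite /bform !mulmxDl mxE. Qed.

Lemma bformZl a x z : bform B (a *: x) z = a * bform B x z.
Proof. by rewrite /bform -!scalemxAl mxE. Qed.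

Lemma bformNl x y : bform B (- x) y = - bform B x y.
Proof. by rewrite /bform !mulNmx mxE. Qed.

Lemma bform0l x : bform B 0 x = 0.
Proof. by rewrite /bform !mul0mx mxE. Qed.

Lemma bformDr x y z : bform B z (x + y) = bform B z x + bform B z y.
Proof. by rewrite /bform linearD /= mulmxDr mxE. Qed.

Lemma bformZr a x z : bform B z (a *: x) = a * bform B z x.
Proof. by rewrite /bform linearZ /= -scalemxAr mxE. Qed.

Lemma bform0r x : bform B x 0 = 0.
Proof. by rewrite /bform trmx0 mulmx0 mxE. Qed.

Hypothesis B_sym : B^T = B.

Lemma bform_sym x y : bform B x y = bform B y x.
Proof. by rewrite /bform -mulmxA pairing_sym trmx_mul B_sym mulmxA. Qed.

Lemma gram_tr k l (M : 'M[R]_(k, n)) (N : 'M[R]_(l, n)) :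
  (M *m B *m N^T)^T = N *m B *m M^T.
Proof. by rewrite !trmx_mul trmxK B_sym mulmxA. Qed.

Lemma isotropic_sub k l (M : 'M[R]_(k, n)) (C : 'M[R]_(l, n)) :
  (M <= C)%MS -> C *m B *m C^T = 0 -> M *m B *m M^T = 0.
Proof.
move=> /submxP[K ->] isoC.
rewrite trmx_mul !mulmxA -[K *m C *m B]mulmxA -[K *m _ *m C^T]mulmxA.
by rewrite isoC mulmx0 mul0mx.
Qed.
End BilinearForm.

Section LieBracket.
Variables (R : fieldType) (n : nat) (br : 'rV[R]_n -> 'rV[R]_n -> 'rV[R]_n).
Hypothesis br_lie : is_lie_bracket br.

Definition adl (z : 'rV[R]_n) : 'M[R]_n := \matrix_i br (delta_mx 0 i) z.
Definition adr (z : 'rV[R]_n) : 'M[R]_n := \matrix_i br z (delta_mx 0 i).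

Lemma adlE x z : br x z = x *m adl z.
Proof.
case: br_lie => [[lin_l _] _ _].
exact: (linear_rowE (fun a u v => lin_l a u v z)).
Qed.

Lemma adrE x z : br z x = x *m adr z.
Proof.
case: br_lie => [[_ lin_r] _ _].
exact: (linear_rowE (fun a u v => lin_r a u v z)).
Qed.

Lemma brDl x y z : br (x + y) z = br x z + br y z.
Proof. by rewrite !(adlE _ z) mulmxDl. Qed.

Lemma brZl a x z : br (a *: x) z = a *: br x z.
Proof. by rewrite !(adlE _ z) scalemxAl. Qed.

Lemma brDr x y z : br z (x + y) = br z x + br z y.
Proof. by rewrite !(adrE _ z) mulmxDl. Qed.

Lemma brZr a x z : br z (a *: x) = a *: br z x.
Proof. by rewrite !(adrE _ z) scalemxAl. Qed.

Lemma brNr x z : br z (- x) = - br z x.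
Proof. by rewrite !(adrE _ z) mulNmx. Qed.

Lemma br_anti x y : br x y = - br y x.
Proof.
have [_ br_xx _] := br_lie.
have := br_xx (x + y); rewrite brDl !brDr !br_xx add0r addr0 => /eqP.
by rewrite addr_eq0 => /eqP.
Qed.

(* The derived algebra [g, g], as the row space spanned by all brackets. *)
Definition derived : 'M[R]_n := (\sum_(j < n) adl (delta_mx 0 j))%MS.

(* [x, y] lies in [g, g]: it is a combination of the [x, e_j]. *)
Lemma br_in_derived x y : (br x y <= derived)%MS.
Proof.
rewrite adrE mulmx_sum_row; apply: summx_sub => j _.
by apply: scalemx_sub; rewrite rowK adlE (sumsmx_sup j) ?submxMl.
Qed.

Lemma derived_ker k (K : 'M[R]_(n, k)) :
  (forall x y, br x y *m K = 0) -> derived *m K = 0.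
Proof.
move=> brK; apply/sub_kermxP; apply/sumsmx_subP => j _; apply/sub_kermxP.
by apply/row_matrixP => i; rewrite row_mul rowK brK row0.
Qed.

Hypothesis two_neq0 : (2%:R : R) != 0.
Hypothesis br_flat : flat br.

(* By Jacobi the curvature is -1/4 [[x,y],z]; flatness makes g 2-step nilpotent. *)
Lemma flat_two_step x y z : br (br x y) z = 0.
Proof.
have [_ _ jacobi] := br_lie.
have J : br x (br y z) - br y (br x z) = br (br x y) z.
  have := jacobi x y z; rewrite (br_anti z x) brNr (br_anti z (br x y)).
  by move/eqP; rewrite subr_eq add0r => /eqP.
set h := (2%:R : R)^-1.
have h_neq0 : h != 0 by rewrite invr_eq0.
have h_sub1 : h - 1 = - h.
  by rewrite -(mulVf two_neq0) mulr_natr mulr2n opprD addrA subrr add0r.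
have := br_flat x y z; rewrite /curvature /nabla !brZr -!scalerBr J -/h.
rewrite -{2}[br _ z]scale1r -scalerBl h_sub1 => /eqP.
by rewrite !scaler_eq0 oppr_eq0 (negbTE h_neq0) => /eqP.
Qed.

Variable B : 'M[R]_n.
Hypothesis B_sym : B^T = B.
Hypothesis B_inv : ad_invariant B br.

(* <[x,y],[z,w]> = -<y,[x,[z,w]]> = 0: the derived algebra is totally isotropic. *)
Lemma derived_isotropic : derived *m B *m derived^T = 0.
Proof.
have DB_br z w : derived *m (B *m (br z w)^T) = 0.
  apply: derived_ker => x y; apply: mx11_eq0; rewrite mulmxA.
  change (bform B (br x y) (br z w) = 0).
  by rewrite B_inv br_anti flat_two_step oppr0 bform0r oppr0.
rewrite -mulmxA; apply: derived_ker => x y.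
by apply: trmx_inj; rewrite trmx0 !trmx_mul trmxK B_sym -mulmxA DB_br.
Qed.

(* <[x,y],y> = -<y,[x,y]> = -<[x,y],y>, hence 0 in characteristic not 2. *)
Lemma bform_br_self x y : bform B (br x y) y = 0.
Proof.
have := B_inv x y y; rewrite (bform_sym B_sym y) => /eqP.
rewrite -addr_eq0 -mulr2n -mulr_natl mulf_eq0 (negbTE two_neq0) /=.
by move=> /eqP.
Qed.

Definition bracket_form m (A : 'M[R]_(m, n)) (u v w : 'rV[R]_m) : R :=
  bform B (br (u *m A) (v *m A)) (w *m A).

Lemma bracket_form_alt3 m (A : 'M[R]_(m, n)) : alt3 (bracket_form A).
Proof.
rewrite /bracket_form; split; first split.
- by move=> a u v w z; rewrite mulmxDl -scalemxAl brDl brZl bformDl bformZl.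
- by move=> a u v w z; rewrite mulmxDl -scalemxAl brDr brZr bformDl bformZl.
- by move=> a u v w z; rewrite mulmxDl -scalemxAl bformDr bformZr.
split=> [u w|u v|u v]; first by case: br_lie => _ -> _; rewrite bform0l.
  by rewrite bform_br_self.
by rewrite br_anti bformNl bform_br_self oppr0.
Qed.

Hypothesis B_unit : B \in unitmx.

(* Nondegeneracy + invariance: <[w,y],e> = <w,[y,e]>, so a vector orthogonal
   to a space E containing [g, g] is central. *)
Lemma perp_derived_central k (E : 'M[R]_(k, n)) w y :
  (derived <= E)%MS -> w *m B *m E^T = 0 -> br w y = 0.
Proof.
move=> DE wE.
suff brB : br w y *m B = 0 by rewrite -(mulmxK B_unit (br w y)) brB mul0mx.
apply/rowP => j; rewrite [RHS]mxE -entry_delta.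
change (bform B (br w y) (delta_mx 0 j) = 0).
rewrite br_anti bformNl B_inv opprK.
have /submxP[c ->] := submx_trans (br_in_derived y (delta_mx 0 j)) DE.
by rewrite /bform trmx_mul mulmxA wE mul0mx mxE.
Qed.
End LieBracket.

Section HyperbolicFrame.
Variables (R : fieldType) (n : nat) (B : 'M[R]_n).
Hypothesis B_sym : B^T = B.

(* Witt: a free totally isotropic family Dm has an isotropic dual family A,
   obtained from any dual family A0 by A = A0 - 1/2 <A0,A0> Dm. *)
Lemma isotropic_dual m (Dm : 'M[R]_(m, n)) :
  (2%:R : R) != 0 -> B \in unitmx -> row_free Dm -> Dm *m B *m Dm^T = 0 ->
  exists A : 'M[R]_(m, n), Dm *m B *m A^T = 1%:M /\ A *m B *m A^T = 0.
Proof.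
move=> two_neq0 B_unit Dm_free Dm_iso.
have : row_free (Dm *m B) by rewrite /row_free mxrankMfree ?row_free_unit.
case/row_freeP => A0t DA0t; set A0 := A0t^T.
set S := A0 *m B *m A0^T; set h := (2%:R : R)^-1.
have DA0 : Dm *m B *m A0^T = 1%:M by rewrite trmxK.
have A0D : A0 *m B *m Dm^T = 1%:M by rewrite -gram_tr // DA0 trmx1.
have S_sym : S^T = S by rewrite gram_tr.
have halves : h + h = 1 by rewrite -mulr2n -mulr_natr mulVf.
exists (A0 - h *: (S *m Dm)).
have AT : (A0 - h *: (S *m Dm))^T = A0^T - h *: (Dm^T *m S).
  by rewrite linearB /= linearZ /= trmx_mul S_sym.
have DA : Dm *m B *m (A0 - h *: (S *m Dm))^T = 1%:M.
  by rewrite AT mulmxBr -scalemxAr mulmxA Dm_iso mul0mx scaler0 subr0 DA0.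
split=> //.
rewrite !mulmxBl -!scalemxAl -[S *m Dm *m B]mulmxA.
rewrite -[S *m (Dm *m B) *m _]mulmxA DA.
rewrite mulmx1 AT mulmxBr -scalemxAr !mulmxA A0D mul1mx -/S.
by rewrite -addrA -opprD -scalerDl halves scale1r subrr.
Qed.

(* The matrix Q of the basis Z ++ Dm ++ A of g, and its candidate inverse P,
   whose columns compute the coordinates of a vector in that basis. *)
Definition frame_mx p m (Z : 'M[R]_(p, n)) (Dm A : 'M[R]_(m, n)) :
    'M[R]_(p + (m + m), n) :=
  col_mx Z (col_mx Dm A).
Definition coord_mx p m (X : 'M[R]_(n, p)) (Dm A : 'M[R]_(m, n)) :
    'M[R]_(n, p + (m + m)) :=
  row_mx X (row_mx (B *m A^T) (B *m Dm^T)).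

(* Given a hyperbolic pair (Dm, A), the projection Pi onto the orthogonal of
   span(Dm, A) yields a complement Z; X expresses the Z-coordinates. *)
Lemma hyperbolic_complement m (Dm A : 'M[R]_(m, n)) :
  Dm *m B *m Dm^T = 0 -> Dm *m B *m A^T = 1%:M -> A *m B *m A^T = 0 ->
  exists p (Z : 'M[R]_(p, n)) (X : 'M[R]_(n, p)),
    [/\ coord_mx X Dm A *m frame_mx Z Dm A = 1%:M,
        frame_mx Z Dm A *m coord_mx X Dm A = 1%:M,
        Z *m B *m Dm^T = 0, Z *m B *m A^T = 0 & Dm *m X = 0].
Proof.
move=> DD DA AA.
have AD : A *m B *m Dm^T = 1%:M by rewrite -gram_tr // DA trmx1.
pose Pi := 1%:M - B *m A^T *m Dm - B *m Dm^T *m A.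
have DPi : Dm *m Pi = 0.
  by rewrite /Pi !mulmxBr mulmx1 !mulmxA DA DD mul1mx mul0mx subrr subr0.
have APi : A *m Pi = 0.
  by rewrite /Pi !mulmxBr mulmx1 !mulmxA AA AD mul0mx mul1mx subr0 subrr.
have PiBA : Pi *m (B *m A^T) = 0.
  rewrite /Pi !mulmxBl mul1mx -!mulmxA !(mulmxA _ B) DA AA.
  by rewrite mulmx0 mulmx1 mulmx0 subrr subr0.
have PiBD : Pi *m (B *m Dm^T) = 0.
  rewrite /Pi !mulmxBl mul1mx -!mulmxA !(mulmxA _ B) DD AD.
  by rewrite mulmx0 mulmx1 mulmx0 subr0 subrr.
have Pi_idem : Pi *m Pi = Pi.
  rewrite {2}/Pi !mulmxBr mulmx1 !mulmxA.
  rewrite -[Pi *m B *m A^T]mulmxA PiBA -[Pi *m B *m Dm^T]mulmxA PiBD.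
  by rewrite !mul0mx !subr0.
pose Z := row_base Pi.
have ZPi : Z *m Pi = Z.
  have /submxP[K ->] : (Z <= Pi)%MS by rewrite eq_row_base.
  by rewrite -mulmxA Pi_idem.
have PiZ : (Pi <= Z)%MS by rewrite eq_row_base.
exists (\rank Pi), Z, (Pi *m pinvmx Z).
have ZBA : Z *m B *m A^T = 0 by rewrite -ZPi -!mulmxA PiBA !mulmx0.
have ZBD : Z *m B *m Dm^T = 0 by rewrite -ZPi -!mulmxA PiBD !mulmx0.
split=> //; last by rewrite mulmxA DPi mul0mx.
  rewrite /coord_mx /frame_mx !mul_row_col (mulmxKpV PiZ) /Pi.
  by rewrite -!mulmxA (addrC (B *m (A^T *m Dm))) addrA subrK subrK.
rewrite /coord_mx /frame_mx mul_col_row mul_mx_row mul_col_mx mul_col_row.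
rewrite [Z *m (Pi *m _)]mulmxA ZPi mulmxVp ?row_base_free // !mulmxA.
rewrite ZBA ZBD DPi APi !mul0mx DA DD AA AD row_mx0 col_mx0.
by rewrite -!scalar_mx_block.
Qed.
End HyperbolicFrame.

Section CoordinateModel.
Variables (R : fieldType) (n m p : nat).
Variables (br : 'rV[R]_n -> 'rV[R]_n -> 'rV[R]_n) (B : 'M[R]_n).
Variables (Z : 'M[R]_(p, n)) (Dm A : 'M[R]_(m, n)) (X : 'M[R]_(n, p)).
Hypotheses (br_lie : is_lie_bracket br) (B_sym : B^T = B) (B_unit : B \in unitmx).
Hypotheses (DD : Dm *m B *m Dm^T = 0) (DA : Dm *m B *m A^T = 1%:M)
  (AA : A *m B *m A^T = 0) (ZD : Z *m B *m Dm^T = 0) (ZA : Z *m B *m A^T = 0).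
Hypotheses (DX : Dm *m X = 0) (PQ : coord_mx B X Dm A *m frame_mx Z Dm A = 1%:M)
  (QP : frame_mx Z Dm A *m coord_mx B X Dm A = 1%:M).
Hypotheses (br_in_Dm : forall x y, (br x y <= Dm)%MS)
  (perp_Dm_central : forall w y, w *m B *m Dm^T = 0 -> br w y = 0).

Local Notation P := (coord_mx B X Dm A).
Local Notation Q := (frame_mx Z Dm A).

Let AD : A *m B *m Dm^T = 1%:M.
Proof. by rewrite -gram_tr // DA trmx1. Qed.

Lemma frame_gram :
  Q *m B *m Q^T = block_mx (Z *m B *m Z^T) 0 0 (block_mx 0 1%:M 1%:M 0).
Proof.
have DZ : Dm *m B *m Z^T = 0 by rewrite -gram_tr // ZD trmx0.
have AZ : A *m B *m Z^T = 0 by rewrite -gram_tr // ZA trmx0.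
rewrite /frame_mx !tr_col_mx mul_col_mx (mul_col_row (Z *m B)) mul_mx_row.
rewrite !mul_col_mx !mul_mx_row.
by rewrite ZD ZA DZ AZ DA DD AA AD row_mx0 col_mx0.
Qed.

Lemma frame_gram_nondeg : nondeg_sym (Z *m B *m Z^T).
Proof.
split; first by rewrite gram_tr.
have : Q *m B *m Q^T *m (P^T *m invmx B *m P) = 1%:M.
  rewrite !mulmxA -[Q *m B *m Q^T *m P^T]mulmxA -trmx_mul PQ trmx1 mulmx1.
  by rewrite mulmxK // QP.
case/mulmx1_unit => + _; rewrite frame_gram unitmxE det_ublock unitrM.
by case/andP; rewrite -unitmxE.
Qed.

(* The bracket only sees the A-coordinates x B Dm^T of its arguments, since
   x - (x B Dm^T) A is orthogonal to Dm, hence central. *)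
Lemma br_A_coordinates x y :
  br x y = br (x *m (B *m Dm^T) *m A) (y *m (B *m Dm^T) *m A).
Proof.
have central (u z : 'rV[R]_n) : br (u - u *m (B *m Dm^T) *m A) z = 0.
  apply: perp_Dm_central.
  by rewrite !mulmxBl -!mulmxA [A *m _]mulmxA AD mulmx1 subrr.
rewrite -{1}[x](subrK (x *m (B *m Dm^T) *m A)) (brDl br_lie) central add0r.
rewrite -{1}[y](subrK (y *m (B *m Dm^T) *m A)) (brDr br_lie).
by rewrite (br_anti br_lie _ (y - _)) central oppr0 add0r.
Qed.

(* In coordinates the bracket is that of t_{a,F}: the image lies in a^* = D
   and its a^*-coordinates are <[x,y], e_j A> = F(u, u', e_j). *)
Lemma coord_bracket x y :
  br x y *m P = prod_bracket (bracket_form br B A) (x *m P) (y *m P).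
Proof.
have /submxP[k brE] := br_in_Dm x y.
have brX : br x y *m X = 0 by rewrite brE -mulmxA DX mulmx0.
have brBD : br x y *m (B *m Dm^T) = 0.
  by rewrite brE -mulmxA [Dm *m _]mulmxA DD mulmx0.
rewrite /coord_mx /prod_bracket /upart !mul_mx_row !row_mxKr brX brBD.
congr (row_mx 0 (row_mx _ 0)); apply/rowP => j.
rewrite br_A_coordinates /omegaF [RHS]mxE /bracket_form /bform trmx_mul.
by rewrite !mulmxA entry_delta.
Qed.

Lemma coord_form x y :
  prod_form (Z *m B *m Z^T) (x *m P) (y *m P) = bform B x y.
Proof.
have -> : bform B x y = (x *m P *m (Q *m B *m Q^T) *m (y *m P)^T) 0 0.
  rewrite /bform [(y *m P)^T]trmx_mul !mulmxA.
  rewrite -[x *m P *m Q *m B *m Q^T *m P^T]mulmxA -trmx_mul PQ trmx1 mulmx1.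
  by rewrite -[x *m P *m Q]mulmxA PQ mulmx1.
rewrite frame_gram /coord_mx !mul_mx_row !tr_row_mx !mul_row_block !mul_row_col.
rewrite !mulmx0 !mulmx1 !addr0 !add0r mul_row_col.
rewrite /prod_form /zpart /lampart /upart !row_mxKr !row_mxKl.
rewrite /bform /pair_dual !addmx_entry (pairing_sym (x *m (B *m Dm^T))).
by rewrite -addrA [X in _ + X]addrC.
Qed.

Lemma coord_metric_iso :
  metric_lie_iso br (bform B) (prod_bracket (bracket_form br B A))
    (prod_form (Z *m B *m Z^T)) (fun x => x *m P).
Proof.
split=> [a x y||x y|x y]; first by rewrite mulmxDl scalemxAl.
- by exists (fun y => y *m Q) => x; rewrite -mulmxA ?PQ ?QP mulmx1.
- exact: coord_bracket.
- exact: coord_form.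
Qed.
End CoordinateModel.

Theorem mainTheorem17 (R : realFieldType) (n : nat)
    (br : 'rV[R]_n -> 'rV[R]_n -> 'rV[R]_n) (B : 'M[R]_n) :
  is_lie_bracket br -> nondeg_sym B -> ad_invariant B br -> flat br ->
  exists (p m : nat) (Bz : 'M[R]_p)
         (F : 'rV[R]_m -> 'rV[R]_m -> 'rV[R]_m -> R)
         (phi : 'rV[R]_n -> 'rV[R]_(p + (m + m))),
    [/\ nondeg_sym Bz, alt3 F &
        metric_lie_iso br (bform B) (prod_bracket F) (prod_form Bz) phi].
Proof.
move=> br_lie [B_sym B_unit] B_inv br_flat.
have two_neq0 : (2%:R : R) != 0 by rewrite pnatr_eq0.
pose Dm := row_base (derived br).
have D_Dm : (derived br <= Dm)%MS by rewrite eq_row_base.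
have DD : Dm *m B *m Dm^T = 0.
  apply: isotropic_sub (derived_isotropic br_lie two_neq0 br_flat B_sym B_inv).
  by rewrite eq_row_base.
have [A [DA AA]] := isotropic_dual B_sym two_neq0 B_unit (row_base_free _) DD.
have [p [Z [X [PQ QP ZD ZA DX]]]] := hyperbolic_complement B_sym DD DA AA.
(* z = span Z, a^* = span Dm = [g, g], a = span A, F(u,v,w) = <[uA,vA],wA>. *)
exists p, (\rank (derived br)), (Z *m B *m Z^T), (bracket_form br B A),
  (fun x => x *m coord_mx B X Dm A).
split; first exact: (frame_gram_nondeg B_sym B_unit DD DA AA ZD ZA PQ QP).
  exact: (bracket_form_alt3 br_lie two_neq0 B_sym B_inv).
apply: coord_metric_iso => // [x y|w y wD].
  exact: submx_trans (br_in_derived br_lie x y) D_Dm.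
exact: perp_derived_central wD.
Qed.
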